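(* Let $N\ge 1$ be the number of users, indexed $1,\dots,N$. For each user $i$ let $\mathbf{x}_i$ be an observed feature vector and let $\phi(\mathbf{x}_i,\ell)\in\mathbb{R}$ be given for $\ell\in\{0,1\}$. For each pair $i<j$ let $\mathbf{z}_{i,j}$ be an observed relationship vector (write $\mathbf{z}_{j,i}=\mathbf{z}_{i,j}$) and let $\psi(\mathbf{z}_{i,j},a,b)\in\mathbb{R}$ be given for $a,b\in\{0,1\}$, where $a$ refers to user $i$ and $b$ to user $j$. Assume: (i) if there is no observed relationship between users $i$ and $j$, then $\psi(\mathbf{z}_{i,j},a,b)=0$ for all $a,b\in\{0,1\}$; (ii) for every pair $i<j$, $\psi(\mathbf{z}_{i,j},1,1)=0\le \psi(\mathbf{z}_{i,j},0,0)\le \psi(\mathbf{z}_{i,j},0,1)$ and $\psi(\mathbf{z}_{i,j},0,0)\le \psi(\mathbf{z}_{i,j},1,0)$. Define the energy of a labeling $\mathbf{L}=(\ell_1,\dots,\ell_N)\in\{0,1\}^N$ by $$E(\mathbf{L})=\sum_{i=1}^N\phi(\mathbf{x}_i,\ell_i)+\sum_{i<j}\psi(\mathbf{z}_{i,j},\ell_i,\ell_j).$$ Define the Energy Graph as the directed graph with node set $\{s,t,u_1,\dots,u_N\}$ and edges with capacities: - for each $i$, an edge $(u_i,t)$ with capacity $\phi(\mathbf{x}_i,1)$; - for each $i$, an edge $(s,u_i)$ with capacity $\phi(\mathbf{x}_i,0)+\tfrac12\sum_{j\ne i}\psi(\mathbf{z}_{i,j},0,0)$; - for each pair $i<j$ with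 an observed relationship, edges $(u_i,u_j)$ with capacity $\psi(\mathbf{z}_{i,j},1,0)-\tfrac12\psi(\mathbf{z}_{i,j},0,0)$ and $(u_j,u_i)$ with capacity $\psi(\mathbf{z}_{i,j},0,1)-\tfrac12\psi(\mathbf{z}_{i,j},0,0)$. For a labeling $\mathbf{L}$, the $\mathbf{L}$-configuration cut is the $s$-$t$ cut $(S_{\mathbf{L}},T_{\mathbf{L}})$ with $S_{\mathbf{L}}=\{s\}\cup\{u_i:\ell_i=1\}$ and $T_{\mathbf{L}}=\{t\}\cup\{u_i:\ell_i=0\}$; its capacity is the sum of capacities of all edges directed from a node of $S_{\mathbf{L}}$ to a node of $T_{\mathbf{L}}$. Then for every $\mathbf{L}\in\{0,1\}^N$, $E(\mathbf{L})$ equals the capacity of the $\mathbf{L}$-configuration cut in the Energy Graph.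
   Context: This models classification of social media users as in a target location ($\ell_i=1$) or not ($\ell_i=0$); $\phi$ is the ''profile energy'' and $\psi$ the ''link energy''. An $s$-$t$ cut is a partition of the node set into $S\ni s$ and $T\ni t$. *)

From mathcomp Require Import all_boot all_order all_algebra.
Set Implicit Arguments. Unset Strict Implicit. Unset Printing Implicit Defensive.
Import Order.TTheory GRing.Theory Num.Theory.
Local Open Scope ring_scope.

(* Labels: false = 0 (not in target location), true = 1. *)

Inductive node (N : nat) := Src | Snk | U of 'I_N.
Arguments Src {N}. Arguments Snk {N}.

Section EnergyGraph.
Variables (R : realFieldType) (N : nat) (X Z : Type).
Variables (x : 'I_N -> X) (z : 'I_N -> 'I_N -> Z).
Variables (phi : X -> bool -> R) (psi : Z -> bool -> bool -> R).
Variable (obs : 'I_N -> 'I_N -> bool).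

Definition energy (L : 'I_N -> bool) : R :=
  \sum_(i < N) phi (x i) (L i)
  + \sum_(i < N) \sum_(j < N | (i < j)%N) psi (z i j) (L i) (L j).

Definition energy_edges : seq (node N * node N * R) :=
  [seq (U i, Snk, phi (x i) true) | i <- enum 'I_N]
  ++ [seq (Src, U i, phi (x i) false
             + 2^-1 * \sum_(j < N | j != i) psi (z i j) false false)
     | i <- enum 'I_N]
  ++ flatten [seq [:: (U p.1, U p.2,
                        psi (z p.1 p.2) true false - 2^-1 * psi (z p.1 p.2) false false);
                      (U p.2, U p.1,
                        psi (z p.1 p.2) false true - 2^-1 * psi (z p.1 p.2) false false)]
             | p : 'I_N * 'I_N <- enum [set: 'I_N * 'I_N] & ((p.1 < p.2)%N && obs p.1 p.2)].

Definition in_S (L : 'I_N -> bool) (v : node N) : bool :=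
  match v with Src => true | Snk => false | U i => L i end.
Definition in_T (L : 'I_N -> bool) (v : node N) : bool :=
  match v with Src => false | Snk => true | U i => ~~ L i end.

Definition config_cut_capacity (L : 'I_N -> bool) : R :=
  \sum_(e <- energy_edges | in_S L e.1.1 && in_T L e.1.2) e.2.

End EnergyGraph.

From mathcomp Require Import all_boot all_order all_algebra.
From mathcomp Require Import ring.
Import Order.TTheory GRing.Theory Num.Theory.
Local Open Scope ring_scope.

(* The unary edges crossing the cut pay phi(x_i, l_i).  Each pair i < j
   receives half of psi(0,0) from the source edge of every endpoint labelled 0,
   and this together with the link edge crossing the cut gives psi(l_i, l_j)
   in each of the four cases.  Only psi(1,1) = 0 and the vanishing of psi on
   unobserved pairs are needed; the inequalities on psi (and N >= 1) merely
   make the capacities nonnegative. *)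

Lemma sum_offdiag_pairs (V : nmodType) (N : nat) (g : 'I_N -> 'I_N -> V) :
  \sum_(i < N) \sum_(j < N | j != i) g i j
  = \sum_(i < N) \sum_(j < N | (i < j)%N) (g i j + g j i).
Proof.
have split_neq i : \sum_(j < N | j != i) g i j
    = \sum_(j < N | (i < j)%N) g i j + \sum_(j < N | (j < i)%N) g i j.
  rewrite (bigID (fun j : 'I_N => (i < j)%N)) /=; congr (_ + _);
  by apply: eq_bigl => j; rewrite -val_eqE /=; case: ltngtP.
rewrite (eq_bigr _ (fun i _ => split_neq i)) big_split /=.
rewrite [X in _ + X](exchange_big_dep xpredT) //= -big_split /=.
by apply: eq_bigr => i _; rewrite big_split.
Qed.

Lemma sum_pairs_cond (V : nmodType) (N : nat) (F : 'I_N * 'I_N -> V)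
    (P Q : 'I_N -> 'I_N -> bool) :
  \sum_(p in [set: 'I_N * 'I_N] | P p.1 p.2 && Q p.1 p.2) F p
  = \sum_(i < N) \sum_(j < N | P i j) (if Q i j then F (i, j) else 0).
Proof.
under [RHS]eq_bigr do rewrite -big_mkcondr.
rewrite pair_big_dep /=.
by apply: eq_big => [[i j]|[i j] _] //=; rewrite in_setT.
Qed.

Definition link_cut_capacity {R : numFieldType} (p : bool -> bool -> R) (a b : bool) : R :=
  (a && ~~ b)%:R * (p true false - 2^-1 * p false false)
  + (b && ~~ a)%:R * (p false true - 2^-1 * p false false).

Lemma link_energy_split (R : numFieldType) (p : bool -> bool -> R) (o a b : bool) :
    p true true = 0 -> (~~ o -> forall a b, p a b = 0) ->
  p a b = (~~ a)%:R * (2^-1 * p false false) + (~~ b)%:R * (2^-1 * p false false)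
          + (if o then link_cut_capacity p a b else 0).
Proof.
move=> p11 p_unobs; case: o p_unobs => [_ | /(_ isT) p0].
  by rewrite /link_cut_capacity; case: a; case: b; rewrite /= ?p11; field.
by rewrite !p0 !mulr0 !addr0.
Qed.

Section ConfigurationCut.
Variables (R : realFieldType) (N : nat) (X Z : Type).
Variables (x : 'I_N -> X) (z : 'I_N -> 'I_N -> Z).
Variables (phi : X -> bool -> R) (psi : Z -> bool -> bool -> R).
Variable obs : 'I_N -> 'I_N -> bool.

Lemma config_cut_capacityE (L : 'I_N -> bool) :
  config_cut_capacity x z phi psi obs L
  = \sum_(i < N) phi (x i) (L i)
    + \sum_(i < N) \sum_(j < N | j != i) (~~ L i)%:R * (2^-1 * psi (z i j) false false)
    + \sum_(i < N) \sum_(j < N | (i < j)%N)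
        (if obs i j then link_cut_capacity (psi (z i j)) (L i) (L j) else 0).
Proof.
rewrite /config_cut_capacity /energy_edges !big_cat !big_map.
rewrite big_flatten big_map big_filter !big_enum_cond /=.
rewrite (@sum_pairs_cond _ _ _ (fun i j => (i < j)%N) obs) addrA.
congr (_ + _).
  rewrite (big_mkcond (fun i => L i && true)) (big_mkcond (fun i => ~~ L i)).
  rewrite -!big_split /=; apply: eq_bigr => i _.
  case: (L i) => /=.
    by rewrite big1 ?addr0 // => j _; rewrite mul0r.
  by rewrite add0r mulr_sumr; under [X in _ = _ + X]eq_bigr do rewrite mul1r.
apply: eq_bigr => i _; apply: eq_bigr => j _; case: (obs i j) => //.
rewrite !big_cons big_nil /link_cut_capacity /=.
by case: (L i); case: (L j); rewrite /= ?mul0r ?mul1r ?addr0 ?add0r.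
Qed.

End ConfigurationCut.

Theorem lemma1 (R : realFieldType) (N : nat) (X Z : Type)
  (x : 'I_N -> X) (z : 'I_N -> 'I_N -> Z)
  (phi : X -> bool -> R) (psi : Z -> bool -> bool -> R)
  (obs : 'I_N -> 'I_N -> bool)
  (hN : (1 <= N)%N)
  (hz : forall i j, z j i = z i j)
  (h_noobs : forall i j : 'I_N, (i < j)%N -> ~~ obs i j ->
       forall a b, psi (z i j) a b = 0)
  (h_psi : forall i j : 'I_N, (i < j)%N ->
       [/\ psi (z i j) true true = 0,
           0 <= psi (z i j) false false,
           psi (z i j) false false <= psi (z i j) false true
         & psi (z i j) false false <= psi (z i j) true false]) :
  forall L : 'I_N -> bool,
    energy x z phi psi L = config_cut_capacity x z phi psi obs L.
Proof.
move=> L; rewrite config_cut_capacityE /energy -addrA sum_offdiag_pairs.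
congr (_ + _); rewrite -big_split; apply: eq_bigr => i _.
rewrite -big_split; apply: eq_bigr => j lt_ij /=.
have [psi11 _ _ _] := h_psi i j lt_ij.
by rewrite [z j i]hz; apply: link_energy_split => // /h_noobs; apply.
Qed.
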